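(* Let $(X,d,\ll,\le,\tau)$ and $(Y,\widetilde d,\widetilde\ll,\widetilde\le,\widetilde\tau)$ be Lorentzian length spaces and let $f:X\to Y$ be a surjective distance homothetic map that is locally causally Lipschitz. If $(X,d,\ll,\le,\tau)$ is causally simple and $(Y,\widetilde d)$ is locally compact, then $(Y,\widetilde d,\widetilde\ll,\widetilde\le,\widetilde\tau)$ is causally simple.
   Context: A causal space $(X,\ll,\le)$ is a set $X$ with two transitive relations $\ll,\le$ such that $\le$ is reflexive and $x\ll y\Rightarrow x\le y$; write $p<q$ if $p\le q$ and $p\neq q$. Set $I^+(x)=\{y: x\ll y\}$, $I^-(x)=\{y: y\ll x\}$, $J^+(x)=\{y:x\le y\}$, $J^-(x)=\{y:y\le x\}$. A Lorentzian pre-length space $(X,d,\ll,\le,\tau)$ is a causal space together with a metric $d$ on $X$ and a function $\tau:X\times X\to[0,\infty]$ that is lower semicontinuous with respect to the topology of $d$, satisfies $\tau(x,z)\ge\tau(x,y)+\tau(y,z)$ whenever $x\le y\le z$, $\tau(x,y)=0$ if $x\not\le y$, and $\tau(x,y)>0\iff x\ll y$. All topological notions refer to the metric topology of $d$. A future directed causal (resp. timelike) curve is a non-constant Lipschitz map $\gamma:I\to X$ ($I\subset\mathbb R$ an interval) with $\gamma(s)\le\gamma(t)$ (resp. $\gamma(s)\ll\gamma(t)$) for all $s<t$. For a future directed causal $\gamma:[a,b]\to X$, $L_\tau(\gamma)=\inf\sum_{i=0}^{N-1}\tau(\gamma(t_i),\gamma(t_{i+1}))$ over all partitions $a=t_0<\dots<t_N=b$.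 The space is causally path connected if whenever $x\le y$ (resp. $x\ll y$) there is a future directed causal (resp. timelike) curve from $x$ to $y$. For open $U\subset X$, $p\le_U q$ means there is a future directed causal curve from $p$ to $q$ with image in $U$. A neighborhood $U$ is causally closed if whenever $p_n\le_U q_n$ with $p_n\to p\in U$, $q_n\to q\in U$, then $p\le_U q$; the space is locally causally closed if every point has a causally closed neighborhood. The space is localizable if every $x$ has a neighborhood $\Omega_x$ such that: (i) all causal curves contained in $\Omega_x$ have uniformly bounded $d$-length; (ii) there is a continuous $\omega_x:\Omega_x\times\Omega_x\to[0,\infty)$ such that $(\Omega_x,d|_{\Omega_x\times\Omega_x},\ll|_{\Omega_x},\le|_{\Omega_x},\omega_x)$ is a Lorentzian pre-length space, and $I^\pm(y)\cap\Omega_x\ne\emptyset$ for every $y\in\Omega_x$; (iii) for all $p,q\in\Omega_x$ with $p<q$ there is a future causal curve $\gamma_{p,q}$ from $p$ to $q$ with $L_\tau(\gamma_{p,q})\ge L_\tau(\gamma)$ for every future causal curve $\gamma\subset\Omega_x$ from $p$ to $q$, and $L_\tau(\gamma_{p,q})=\omega_x(p,q)$. A Lorentzian length space is a causally path connected, locally causally closed, localizable Lorentzian pre-length space with $\tau(x,y)=\sup\{L_\tau(\gamma):\gamma$ a future causal curve from $x$ to $y\}$. Causal: $x\le y$, $y\le x\Rightarrow x=y$. Causally simple: causal and $J^+(x)$, $J^-(x)$ closed for all $x$. A map $f:X\to Y$ is distance homothetic if there is $c>0$ with $\widetilde\tau(f(p),f(q))=c\,\tau(p,q)$ for all $p,q\in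 X$; it is locally causally Lipschitz if for every $x\in X$ there are an open $U\ni x$ and $M>0$ with $\widetilde d(f(x_1),f(x_2))\le M\,d(x_1,x_2)$ for all $x_1,x_2\in U$ with $x_1\le x_2$. *)

From Stdlib Require Import Reals List.
From Coquelicot Require Export Rbar Lub.
Open Scope R_scope.

Section LorentzianDefs.

Context {X : Type}.

Definition is_metric (d : X -> X -> R) : Prop :=
  (forall x y, 0 <= d x y) /\ (forall x, d x x = 0) /\
  (forall x y, d x y = 0 -> x = y) /\ (forall x y, d x y = d y x) /\
  (forall x y z, d x z <= d x y + d y z).

Definition open_set (d : X -> X -> R) (U : X -> Prop) : Prop :=
  forall x, U x -> exists e, 0 < e /\ forall y, d x y < e -> U y.

Definition closed_set (d : X -> X -> R) (A : X -> Prop) : Prop :=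
  open_set d (fun x => ~ A x).

Definition compact_set (d : X -> X -> R) (K : X -> Prop) : Prop :=
  forall (I : Type) (U : I -> X -> Prop),
    (forall i, open_set d (U i)) ->
    (forall x, K x -> exists i, U i x) ->
    exists l : list I, forall x, K x -> exists i, In i l /\ U i x.

Definition locally_compact (d : X -> X -> R) : Prop :=
  forall x, exists K, compact_set d K /\
    exists e, 0 < e /\ forall y, d x y < e -> K y.

Definition seq_cv (d : X -> X -> R) (p : nat -> X) (x : X) : Prop :=
  forall e, 0 < e -> exists N, forall n, (N <= n)%nat -> d (p n) x < e.

Fixpoint sumR (f : nat -> R) (n : nat) : R :=
  match n with O => 0 | S k => sumR f k + f k end.

Fixpoint sumRbar (f : nat -> Rbar) (n : nat) : Rbar :=
  match n with O => Finite 0 | S k => Rbar_plus (sumRbar f k) (f k) end.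

Definition partition (a b : R) (n : nat) (t : nat -> R) : Prop :=
  (0 < n)%nat /\ t O = a /\ t n = b /\ (forall i, (i < n)%nat -> t i < t (S i)).

Definition causal_space (ll le : X -> X -> Prop) : Prop :=
  (forall x y z, ll x y -> ll y z -> ll x z) /\
  (forall x y z, le x y -> le y z -> le x z) /\
  (forall x, le x x) /\
  (forall x y, ll x y -> le x y).

Definition lt_c (le : X -> X -> Prop) (p q : X) : Prop := le p q /\ p <> q.

Definition lsc_tau (d : X -> X -> R) (tau : X -> X -> Rbar) : Prop :=
  forall x y (r : R), Rbar_lt (Finite r) (tau x y) ->
    exists e, 0 < e /\ forall x' y', d x x' < e -> d y y' < e ->
      Rbar_lt (Finite r) (tau x' y').

Definition LPLS (d : X -> X -> R) (ll le : X -> X -> Prop)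
    (tau : X -> X -> Rbar) : Prop :=
  causal_space ll le /\ is_metric d /\
  (forall x y, Rbar_le (Finite 0) (tau x y)) /\
  lsc_tau d tau /\
  (forall x y z, le x y -> le y z ->
     Rbar_le (Rbar_plus (tau x y) (tau y z)) (tau x z)) /\
  (forall x y, ~ le x y -> tau x y = Finite 0) /\
  (forall x y, Rbar_lt (Finite 0) (tau x y) <-> ll x y).

(* a non-constant Lipschitz map [a,b] -> X with a < b (values outside [a,b] irrelevant) *)
Definition lipschitz_nonconst_on (d : X -> X -> R) (g : R -> X) (a b : R) : Prop :=
  a < b /\
  (exists L, forall s t, a <= s <= b -> a <= t <= b -> d (g s) (g t) <= L * Rabs (s - t)) /\
  (exists s t, a <= s <= b /\ a <= t <= b /\ g s <> g t).

Definition fd_causal_curve (d : X -> X -> R) (le : X -> X -> Prop)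
    (g : R -> X) (a b : R) : Prop :=
  lipschitz_nonconst_on d g a b /\
  forall s t, a <= s -> s < t -> t <= b -> le (g s) (g t).

Definition fd_timelike_curve (d : X -> X -> R) (ll : X -> X -> Prop)
    (g : R -> X) (a b : R) : Prop :=
  lipschitz_nonconst_on d g a b /\
  forall s t, a <= s -> s < t -> t <= b -> ll (g s) (g t).

Definition curve_in (U : X -> Prop) (g : R -> X) (a b : R) : Prop :=
  forall s, a <= s <= b -> U (g s).

Definition Ltau (tau : X -> X -> Rbar) (g : R -> X) (a b : R) : Rbar :=
  Rbar_glb (fun l => exists n t, partition a b n t /\
      l = sumRbar (fun i => tau (g (t i)) (g (t (S i)))) n).

Definition dlength_le (d : X -> X -> R) (g : R -> X) (a b C : R) : Prop :=
  forall n t, partition a b n t -> sumR (fun i => d (g (t i)) (g (t (S i)))) n <= C.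

Definition causally_path_connected (d : X -> X -> R) (ll le : X -> X -> Prop) : Prop :=
  (forall x y, lt_c le x y ->
     exists g a b, fd_causal_curve d le g a b /\ g a = x /\ g b = y) /\
  (forall x y, ll x y ->
     exists g a b, fd_timelike_curve d ll g a b /\ g a = x /\ g b = y).

Definition le_in (d : X -> X -> R) (le : X -> X -> Prop) (U : X -> Prop) (p q : X) : Prop :=
  p = q \/
  exists g a b, fd_causal_curve d le g a b /\ g a = p /\ g b = q /\ curve_in U g a b.

Definition causally_closed (d : X -> X -> R) (le : X -> X -> Prop) (U : X -> Prop) : Prop :=
  forall (p q : nat -> X) (p0 q0 : X),
    (forall n, le_in d le U (p n) (q n)) ->
    seq_cv d p p0 -> U p0 -> seq_cv d q q0 -> U q0 ->
    le_in d le U p0 q0.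

Definition locally_causally_closed (d : X -> X -> R) (le : X -> X -> Prop) : Prop :=
  forall x, exists U, open_set d U /\ U x /\ causally_closed d le U.

Definition LPLS_on (d : X -> X -> R) (ll le : X -> X -> Prop)
    (O : X -> Prop) (om : X -> X -> R) : Prop :=
  (forall x y, O x -> O y -> 0 <= om x y) /\
  (forall x y, O x -> O y -> forall e, 0 < e -> exists del, 0 < del /\
     forall x' y', O x' -> O y' -> d x x' < del -> d y y' < del ->
       Rabs (om x' y' - om x y) < e) /\
  (forall x y z, O x -> O y -> O z -> le x y -> le y z ->
     om x y + om y z <= om x z) /\
  (forall x y, O x -> O y -> ~ le x y -> om x y = 0) /\
  (forall x y, O x -> O y -> (0 < om x y <-> ll x y)).

Definition localizable (d : X -> X -> R) (ll le : X -> X -> Prop)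
    (tau : X -> X -> Rbar) : Prop :=
  forall x, exists (O : X -> Prop) (om : X -> X -> R),
    open_set d O /\ O x /\
    (exists C, forall g a b, fd_causal_curve d le g a b -> curve_in O g a b ->
        dlength_le d g a b C) /\
    LPLS_on d ll le O om /\
    (forall y, O y -> (exists z, O z /\ ll y z) /\ (exists z, O z /\ ll z y)) /\
    (forall p q, O p -> O q -> lt_c le p q ->
       exists g a b, fd_causal_curve d le g a b /\ g a = p /\ g b = q /\
         (forall h a' b', fd_causal_curve d le h a' b' -> h a' = p -> h b' = q ->
            curve_in O h a' b' -> Rbar_le (Ltau tau h a' b') (Ltau tau g a b)) /\
         Ltau tau g a b = Finite (om p q)).

(* tau(x,y) = sup of tau-lengths of f.d. causal curves from x to y (sup of the empty set = 0) *)
Definition tau_intrinsic (d : X -> X -> R) (le : X -> X -> Prop)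
    (tau : X -> X -> Rbar) : Prop :=
  forall x y, tau x y = Rbar_lub (fun l => l = Finite 0 \/
     exists g a b, fd_causal_curve d le g a b /\ g a = x /\ g b = y /\ l = Ltau tau g a b).

Definition LLS (d : X -> X -> R) (ll le : X -> X -> Prop) (tau : X -> X -> Rbar) : Prop :=
  LPLS d ll le tau /\ causally_path_connected d ll le /\
  locally_causally_closed d le /\ localizable d ll le tau /\ tau_intrinsic d le tau.

Definition causal (le : X -> X -> Prop) : Prop :=
  forall x y, le x y -> le y x -> x = y.

Definition causally_simple (d : X -> X -> R) (le : X -> X -> Prop) : Prop :=
  causal le /\ forall x, closed_set d (fun y => le x y) /\ closed_set d (fun y => le y x).

End LorentzianDefs.

Definition distance_homothetic {X Y : Type} (tau : X -> X -> Rbar)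
    (tau' : Y -> Y -> Rbar) (f : X -> Y) : Prop :=
  exists c, 0 < c /\ forall p q, tau' (f p) (f q) = Rbar_mult (Finite c) (tau p q).

Definition locally_causally_Lipschitz {X Y : Type} (d : X -> X -> R)
    (le : X -> X -> Prop) (d' : Y -> Y -> R) (f : X -> Y) : Prop :=
  forall x, exists U M, open_set d U /\ U x /\ 0 < M /\
    forall x1 x2, U x1 -> U x2 -> le x1 x2 -> d' (f x1) (f x2) <= M * d x1 x2.

From Pilot Require Import Defs.
From Stdlib Require Import Reals.
From Stdlib Require Import Lra List Classical ClassicalEpsilon.
Open Scope R_scope.

(* Since [f] scales the time separation by a positive constant, it preserves and reflects
   [<<].  In the causally simple space X every point is a limit of its chronological past and
   future, so [x <= y] holds iff [z << w] whenever [z << x] and [y << w]; hence [f] reflects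
   [<=], which gives causality of Y.  Conversely, this characterisation of [<=] holds in Y
   (and yields closed causal cones there) as soon as [f] also preserves [<=].  Locally around
   [p] this follows from causal closedness near [f p]: images of timelike curves from just
   below [q1 <= p] to just above [p <= q2] stay close to [f p], by a compactness argument in a
   compact neighbourhood of [f p] that uses causal simplicity of X to identify cluster points.
   Along a causal curve the local steps are chained by real induction. *)

Lemma continuity_induction (a b : R) (P : R -> Prop) :
  P a ->
  (forall s, a <= s <= b -> exists del, 0 < del /\
     forall t u, a <= t <= s -> s <= u <= b -> s - t < del -> u - s < del -> P t -> P u) ->
  forall u, a <= u <= b -> P u.
Proof.
  intros Pa Hstep u Hu.
  set (E := fun t => a <= t <= b /\ forall v, a <= v <= t -> P v).
  assert (Ea : E a).
  { split; [lra|]. intros v Hv. replace v with a by lra. exact Pa. }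
  destruct (completeness E) as [m [Hub Hlub]].
  { exists b. intros t [Ht _]. lra. }
  { exists a. exact Ea. }
  assert (Ham : a <= m) by (apply Hub, Ea).
  assert (Hmb : m <= b) by (apply Hlub; intros t [Ht _]; lra).
  assert (Hbelow : forall v, a <= v < m -> P v).
  { intros v Hv. apply NNPP. intro HPv. enough (m <= v) by lra.
    apply Hlub. intros t [_ Ht]. apply Rnot_lt_le. intro Hvt. apply HPv, Ht. lra. }
  destruct (Hstep m (conj Ham Hmb)) as [del [Hdel Hm]].
  set (t := Rmax a (m - del / 2)).
  assert (Ht : a <= t <= m /\ m - t < del).
  { unfold t. split; [split|]; [apply Rmax_l| apply Rmax_lub; lra|].
    pose proof (Rmax_r a (m - del / 2)). lra. }
  assert (Pt : P t).
  { destruct (Rlt_le_dec t m) as [Htm|Htm]; [apply Hbelow; lra|].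
    replace t with a; [exact Pa|]. unfold t in *. revert Htm. apply Rmax_case; lra. }
  assert (Habove : forall v, m <= v <= b -> v - m < del -> P v).
  { intros v Hv Hvm. apply (Hm t v); tauto || lra. }
  destruct (Req_dec m b) as [Emb|Nmb].
  - destruct (Rlt_le_dec u m); [apply Hbelow; lra|]. apply Habove; lra.
  - exfalso.
    set (m' := Rmin b (m + del / 2)).
    assert (Hm' : m < m' <= b) by (unfold m'; split; [apply Rmin_glb_lt|apply Rmin_l]; lra).
    assert (Hm'del : m' <= m + del / 2) by apply Rmin_r.
    assert (E m').
    { split; [lra|]. intros v Hv. destruct (Rlt_le_dec v m); [apply Hbelow; lra|].
      apply Habove; lra. }
    assert (m' <= m) by (apply Hub; assumption). lra.
Qed.

Lemma exists_vanishing_seq {A : Type} (P : A -> Prop) (m : A -> R) :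
  (forall e, 0 < e -> exists a, P a /\ m a < e) ->
  exists u : nat -> A, (forall n, P (u n)) /\
    forall e, 0 < e -> exists N, forall n, (N <= n)%nat -> m (u n) < e.
Proof.
  intros H.
  assert (Hn : forall n : nat, exists a, P a /\ m a < / (INR n + 1)).
  { intro n. apply H, Rinv_0_lt_compat. pose proof (pos_INR n). lra. }
  exists (fun n => proj1_sig (constructive_indefinite_description _ (Hn n))).
  split; [intro n; apply (proj2_sig (constructive_indefinite_description _ (Hn n)))|].
  intros e He. destruct (archimed_cor1 e He) as [N [HN HN0]]. exists N. intros n HNn.
  destruct (proj2_sig (constructive_indefinite_description _ (Hn n))) as [_ Hm].
  eapply Rlt_le_trans; [exact Hm|]. apply Rlt_le, Rle_lt_trans with (/ INR N); [|exact HN].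
  apply Rinv_le_contravar; [apply lt_0_INR; exact HN0|]. apply le_INR in HNn. lra.
Qed.

Section Metric.
Context {Z : Type} (dz : Z -> Z -> R) (Hm : is_metric dz).

Lemma metric_refl x : dz x x = 0. Proof. apply Hm. Qed.
Lemma metric_sym x y : dz x y = dz y x. Proof. apply Hm. Qed.
Lemma metric_triangle x y z : dz x z <= dz x y + dz y z. Proof. apply Hm. Qed.

Definition lipschitz_on (g : R -> Z) (a b L : R) : Prop :=
  forall s t, a <= s <= b -> a <= t <= b -> dz (g s) (g t) <= L * Rabs (s - t).

Lemma lipschitz_on_small g a b L : lipschitz_on g a b L ->
  forall e, 0 < e -> exists del, 0 < del /\
    forall s t, a <= s <= b -> a <= t <= b -> Rabs (s - t) < del -> dz (g s) (g t) < e.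
Proof.
  intros HL e He. pose proof (Rabs_pos L) as HL0.
  exists (e / (Rabs L + 1)). split; [apply Rdiv_lt_0_compat; lra|].
  intros s t Hs Ht Hst. eapply Rle_lt_trans; [apply HL; assumption|].
  apply Rle_lt_trans with (Rabs L * Rabs (s - t)).
  { apply Rmult_le_compat_r; [apply Rabs_pos|apply Rle_abs]. }
  apply Rle_lt_trans with (Rabs L * (e / (Rabs L + 1))).
  { apply Rmult_le_compat_l; lra. }
  apply (Rmult_lt_reg_r (Rabs L + 1)); [lra|]. field_simplify; nra.
Qed.

Lemma lipschitz_on_ordered g a b L :
  (forall s t, a <= s <= b -> a <= t <= b -> s <= t -> dz (g s) (g t) <= L * (t - s)) ->
  lipschitz_on g a b L.
Proof.
  intros H s t Hs Ht. destruct (Rle_lt_dec s t).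
  - rewrite Rabs_left1, Ropp_minus_distr by lra. auto.
  - rewrite metric_sym, Rabs_right by lra. auto with real.
Qed.

Lemma lipschitz_on_of_local g a b : a <= b ->
  (forall s, a <= s <= b -> exists del M, 0 < del /\
     forall s1 s2, a <= s1 <= b -> a <= s2 <= b -> Rabs (s1 - s) < del -> Rabs (s2 - s) < del ->
       dz (g s1) (g s2) <= M * Rabs (s1 - s2)) ->
  exists L, lipschitz_on g a b L.
Proof.
  intros Hab Hloc.
  enough (HP : forall u, a <= u <= b -> exists C, lipschitz_on g a u C) by (apply HP; lra).
  apply continuity_induction.
  { exists 0. intros s1 s2 H1 H2.
    replace s1 with a by lra. replace s2 with a by lra. rewrite metric_refl. lra. }
  intros s Hs. destruct (Hloc s Hs) as [del [M [Hdel HM]]].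
  exists del. split; [exact Hdel|]. intros t u Ht Hu Hst Hus [C0 Hlip0].
  set (C := Rmax C0 M).
  assert (HC0C : C0 <= C) by apply Rmax_l.
  assert (HMC : M <= C) by apply Rmax_r.
  exists C. apply lipschitz_on_ordered. intros s1 s2 H1 H2 H12.
  assert (Hold : forall v w, a <= v <= t -> a <= w <= t -> v <= w -> dz (g v) (g w) <= C * (w - v)).
  { intros v w Hv Hw Hvw. eapply Rle_trans; [apply Hlip0; assumption|].
    rewrite Rabs_left1, Ropp_minus_distr by lra. apply Rmult_le_compat_r; lra. }
  assert (Hnew : forall v w, t <= v <= u -> t <= w <= u -> v <= w -> dz (g v) (g w) <= C * (w - v)).
  { intros v w Hv Hw Hvw. eapply Rle_trans.
    { apply HM; try lra; apply Rabs_def1; lra. }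
    rewrite Rabs_left1, Ropp_minus_distr by lra. apply Rmult_le_compat_r; lra. }
  destruct (Rle_lt_dec s2 t); [apply Hold; lra|].
  destruct (Rle_lt_dec t s1); [apply Hnew; lra|].
  pose proof (metric_triangle (g s1) (g t) (g s2)).
  assert (dz (g s1) (g t) <= C * (t - s1)) by (apply Hold; lra).
  assert (dz (g t) (g s2) <= C * (s2 - t)) by (apply Hnew; lra).
  lra.
Qed.

Lemma lipschitz_curve_crosses_annulus g a b L z s0 r1 r2 :
  lipschitz_on g a b L -> a <= s0 <= b -> r1 < r2 ->
  dz z (g a) < r1 -> r2 <= dz z (g s0) ->
  exists s, a <= s <= b /\ r1 <= dz z (g s) <= r2.
Proof.
  intros HL Hs0 Hr Ha Hs0r. apply NNPP. intro Hno.
  destruct (lipschitz_on_small g a b L HL (r2 - r1)) as [del [Hdel Hsmall]]; [lra|].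
  enough (Hin : forall u, a <= u <= b -> dz z (g u) < r1) by (specialize (Hin s0 Hs0); lra).
  apply continuity_induction; [exact Ha|]. intros s Hs. exists (del / 2). split; [lra|].
  intros t u Ht Hu Hst Hus Pt.
  assert (dz (g t) (g u) < r2 - r1) by (apply Hsmall; [lra|lra|apply Rabs_def1; lra]).
  pose proof (metric_triangle z (g t) (g u)).
  apply Rnot_le_lt. intro. apply Hno. exists u. split; [lra|split; lra].
Qed.

Definition cluster_point (u : nat -> Z) (z : Z) : Prop :=
  forall e, 0 < e -> forall N, exists n, (N <= n)%nat /\ dz (u n) z < e.

Lemma compact_cluster_point K : compact_set dz K ->
  forall u, (forall n, K (u n)) -> exists z, K z /\ cluster_point u z.
Proof.
  intros HK u Hu. apply NNPP. intro Hno.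
  (* cover [K] by balls [B(z, e)] that the sequence avoids from index [N] on *)
  set (Avoids := fun (i : Z * R * nat) => let '(z, e, N) := i in
                   0 < e /\ forall n, (N <= n)%nat -> e <= dz (u n) z).
  set (U := fun (i : Z * R * nat) (w : Z) => Avoids i /\ dz (fst (fst i)) w < snd (fst i)).
  destruct (HK _ U) as [l Hl].
  - intros [[z e] N] w [HA Hw]. simpl in Hw. exists (e - dz z w). split; [lra|].
    intros v Hv. split; [exact HA|]. simpl. pose proof (metric_triangle z w v). lra.
  - intros z Hz.
    assert (exists e N, 0 < e /\ forall n, (N <= n)%nat -> e <= dz (u n) z) as [e [N [He HN]]].
    { apply NNPP. intro H. apply Hno. exists z. split; [exact Hz|].
      intros e He N. apply NNPP. intro H'. apply H. exists e, N. split; [exact He|].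
      intros n Hn. apply Rnot_lt_le. intro. apply H'. exists n. auto. }
    exists (z, e, N). split; [simpl; auto|]. simpl. rewrite metric_refl. exact He.
  - set (M := list_max (map snd l)).
    destruct (Hl (u M) (Hu M)) as [[[z e] N] [Hin [[He HN] Hw]]]. simpl in Hw.
    assert (HNM : (N <= M)%nat).
    { assert (Hall := proj1 (list_max_le (map snd l) M) (le_n M)).
      rewrite Forall_forall in Hall. apply Hall. exact (in_map snd l _ Hin). }
    specialize (HN M HNM). rewrite metric_sym in HN. lra.
Qed.

Lemma seq_cv_of_adherent (P : Z -> Prop) x :
  (forall e, 0 < e -> exists z, P z /\ dz z x < e) ->
  exists u, (forall n, P (u n)) /\ seq_cv dz u x.
Proof. apply exists_vanishing_seq. Qed.

End Metric.

Section CausalSpace.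
Context {Z : Type} (d : Z -> Z -> R) (ll le : Z -> Z -> Prop) (Hcs : causal_space ll le).

Lemma ll_trans x y z : ll x y -> ll y z -> ll x z. Proof. destruct Hcs as (H & _). apply H. Qed.
Lemma le_trans x y z : le x y -> le y z -> le x z. Proof. destruct Hcs as (_ & H & _). apply H. Qed.
Lemma le_refl x : le x x. Proof. destruct Hcs as (_ & _ & H & _). apply H. Qed.
Lemma ll_le x y : ll x y -> le x y. Proof. destruct Hcs as (_ & _ & _ & H). apply H. Qed.

Lemma fd_causal_curve_le g a b : fd_causal_curve d le g a b ->
  forall s t, a <= s -> s <= t -> t <= b -> le (g s) (g t).
Proof.
  intros [_ Hg] s t Hs Hst Ht. destruct (Req_dec s t) as [->|Nst]; [apply le_refl|].
  apply Hg; lra.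
Qed.

Lemma fd_timelike_curve_causal g a b : fd_timelike_curve d ll g a b -> fd_causal_curve d le g a b.
Proof. intros [Hlip Hg]. split; [exact Hlip|]. intros; apply ll_le; auto. Qed.

Lemma le_in_le U p q : le_in d le U p q -> le p q.
Proof.
  intros [-> | [g [a [b [[[Hab _] Hg] [<- [<- _]]]]]]]; [apply le_refl|]. apply Hg; lra.
Qed.

Lemma causal_chronological : causal le -> causally_path_connected d ll le -> forall x, ~ ll x x.
Proof.
  intros Hcausal [_ Hpc] x Hx.
  destruct (Hpc x x Hx) as [g [a [b [[[Hab [_ [s [t [Hs [Ht Hne]]]]]] Hg] [Ha Hb]]]]].
  assert (Hconst : forall u, a <= u <= b -> g u = x).
  { intros u Hu. destruct (Req_dec u a) as [->|Nua]; [exact Ha|].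
    destruct (Req_dec u b) as [->|Nub]; [exact Hb|].
    apply Hcausal; [rewrite <- Hb|rewrite <- Ha]; apply ll_le, Hg; lra. }
  apply Hne. rewrite (Hconst s Hs), (Hconst t Ht). reflexivity.
Qed.

End CausalSpace.

Definition chronologically_determined {Z : Type} (ll le : Z -> Z -> Prop) : Prop :=
  forall x y, (forall z w, ll z x -> ll y w -> ll z w) -> le x y.

Section PreLengthSpace.
Context {Z : Type} (d : Z -> Z -> R) (ll le : Z -> Z -> Prop) (tau : Z -> Z -> Rbar)
  (HL : LPLS d ll le tau).

Lemma LPLS_causal_space : causal_space ll le. Proof. apply HL. Qed.
Lemma LPLS_metric : is_metric d. Proof. apply HL. Qed.

Lemma ll_le_trans x y z : ll x y -> le y z -> ll x z.
Proof.
  destruct HL as [Hcs [_ [Hnn [_ [Hrev [_ Hpos]]]]]]. intros Hxy Hyz. apply Hpos.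
  eapply Rbar_lt_le_trans; [|apply Hrev; [apply (ll_le _ _ Hcs)|]; eassumption].
  apply Hpos in Hxy. specialize (Hnn y z).
  destruct (tau x y), (tau y z); simpl in *; auto; lra.
Qed.

Lemma le_ll_trans x y z : le x y -> ll y z -> ll x z.
Proof.
  destruct HL as [Hcs [_ [Hnn [_ [Hrev [_ Hpos]]]]]]. intros Hxy Hyz. apply Hpos.
  eapply Rbar_lt_le_trans; [|apply Hrev; [|apply (ll_le _ _ Hcs)]; eassumption].
  apply Hpos in Hyz. specialize (Hnn x y).
  destruct (tau x y), (tau y z); simpl in *; auto; lra.
Qed.

Lemma ll_open x y : ll x y ->
  exists e, 0 < e /\ forall x' y', d x x' < e -> d y y' < e -> ll x' y'.
Proof.
  destruct HL as [_ [_ [_ [Hlsc [_ [_ Hpos]]]]]]. intros Hxy.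
  destruct (Hlsc x y 0) as [e [He Hball]]; [apply Hpos, Hxy|].
  exists e. split; [exact He|]. intros x' y' Hx Hy. apply Hpos, Hball; assumption.
Qed.

Lemma closed_future_of_determined : chronologically_determined ll le ->
  forall x, Defs.closed_set d (fun y => le x y).
Proof.
  intros Hdet x y Hxy. apply NNPP. intro Hno. apply Hxy, Hdet. intros z w Hzx Hyw.
  destruct (ll_open y w Hyw) as [e [He Hball]].
  assert (exists y', d y y' < e /\ le x y') as [y' [Hyy' Hxy']].
  { apply NNPP. intro H. apply Hno. exists e. split; [exact He|]. intros y' Hy' Hle. eauto. }
  apply (ll_trans _ _ LPLS_causal_space) with y'; [exact (ll_le_trans z x y' Hzx Hxy')|].
  apply Hball; [exact Hyy'|]. rewrite (metric_refl d LPLS_metric). exact He.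
Qed.

Lemma closed_past_of_determined : chronologically_determined ll le ->
  forall x, Defs.closed_set d (fun y => le y x).
Proof.
  intros Hdet x y Hyx. apply NNPP. intro Hno. apply Hyx, Hdet. intros z w Hzy Hxw.
  destruct (ll_open z y Hzy) as [e [He Hball]].
  assert (exists y', d y y' < e /\ le y' x) as [y' [Hyy' Hy'x]].
  { apply NNPP. intro H. apply Hno. exists e. split; [exact He|]. intros y' Hy' Hle. eauto. }
  apply (ll_trans _ _ LPLS_causal_space) with y'; [|exact (le_ll_trans y' x w Hy'x Hxw)].
  apply Hball; [|exact Hyy']. rewrite (metric_refl d LPLS_metric). exact He.
Qed.

End PreLengthSpace.

Section Approximation.
Context {Z : Type} (d : Z -> Z -> R) (ll le : Z -> Z -> Prop) (tau : Z -> Z -> Rbar)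
  (HL : LPLS d ll le tau) (Hpc : causally_path_connected d ll le)
  (Hloc : localizable d ll le tau).

Lemma past_adherent p e : 0 < e -> exists z, ll z p /\ d z p < e.
Proof.
  intros He. destruct (Hloc p) as [O [om [_ [HOp [_ [_ [Hne _]]]]]]].
  destruct (Hne p HOp) as [_ [z [_ Hz]]].
  destruct (proj2 Hpc z p Hz) as [g [a [b [[[Hab [[L HL'] _]] Hg] [Ha Hb]]]]].
  destruct (lipschitz_on_small d g a b L HL' e He) as [del [Hdel Hsmall]].
  set (s := Rmax a (b - del / 2)).
  assert (Hs : a <= s < b /\ b - s <= del / 2).
  { unfold s. pose proof (Rmax_r a (b - del / 2)).
    split; [split; [apply Rmax_l|apply Rmax_lub_lt; lra]|lra]. }
  exists (g s). rewrite <- Hb. split; [apply Hg; lra|].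
  apply Hsmall; [lra|lra|apply Rabs_def1; lra].
Qed.

Lemma future_adherent p e : 0 < e -> exists w, ll p w /\ d w p < e.
Proof.
  intros He. destruct (Hloc p) as [O [om [_ [HOp [_ [_ [Hne _]]]]]]].
  destruct (Hne p HOp) as [[w [_ Hw]] _].
  destruct (proj2 Hpc p w Hw) as [g [a [b [[[Hab [[L HL'] _]] Hg] [Ha Hb]]]]].
  destruct (lipschitz_on_small d g a b L HL' e He) as [del [Hdel Hsmall]].
  set (s := Rmin b (a + del / 2)).
  assert (Hs : a < s <= b /\ s - a <= del / 2).
  { unfold s. pose proof (Rmin_r b (a + del / 2)).
    split; [split; [apply Rmin_glb_lt; lra|apply Rmin_l]|lra]. }
  exists (g s). rewrite <- Ha. split; [apply Hg; lra|].
  apply Hsmall; [lra|lra|apply Rabs_def1; lra].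
Qed.

Lemma past_seq_cv p r : 0 < r ->
  exists u, (forall n, ll (u n) p /\ d (u n) p < r) /\ seq_cv d u p.
Proof.
  intros Hr. apply (seq_cv_of_adherent d (fun z => ll z p /\ d z p < r)). intros e He.
  destruct (past_adherent p (Rmin e r)) as [z [Hz Hdz]]; [apply Rmin_glb_lt; lra|].
  pose proof (Rmin_l e r). pose proof (Rmin_r e r).
  exists z. repeat split; [exact Hz|lra|lra].
Qed.

Lemma future_seq_cv p r : 0 < r ->
  exists w, (forall n, ll p (w n) /\ d (w n) p < r) /\ seq_cv d w p.
Proof.
  intros Hr. apply (seq_cv_of_adherent d (fun z => ll p z /\ d z p < r)). intros e He.
  destruct (future_adherent p (Rmin e r)) as [z [Hz Hdz]]; [apply Rmin_glb_lt; lra|].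
  pose proof (Rmin_l e r). pose proof (Rmin_r e r).
  exists z. repeat split; [exact Hz|lra|lra].
Qed.

Lemma causally_simple_determined : causally_simple d le -> chronologically_determined ll le.
Proof.
  intros [_ Hcl] x y Hxy.
  pose proof (LPLS_causal_space _ _ _ _ HL) as Hcs.
  pose proof (LPLS_metric _ _ _ _ HL) as Hm.
  assert (Hpast : forall z, ll z x -> le z y).
  { intros z Hz. apply NNPP. intro Hn.
    destruct (proj1 (Hcl z) y Hn) as [e [He Hball]].
    destruct (future_adherent y e He) as [w [Hw Hd]].
    apply (Hball w); [rewrite (metric_sym d Hm); exact Hd|]. apply (ll_le _ _ Hcs), Hxy; assumption. }
  apply NNPP. intro Hn. destruct (proj2 (Hcl y) x Hn) as [e [He Hball]].
  destruct (past_adherent x e He) as [z [Hz Hd]].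
  apply (Hball z); [rewrite (metric_sym d Hm); exact Hd|]. apply Hpast, Hz.
Qed.

End Approximation.

Section Homothety.
Context {X Y : Type}
  (d : X -> X -> R) (ll le : X -> X -> Prop) (tau : X -> X -> Rbar)
  (d' : Y -> Y -> R) (ll' le' : Y -> Y -> Prop) (tau' : Y -> Y -> Rbar) (f : X -> Y)
  (HX : LPLS d ll le tau) (pcX : causally_path_connected d ll le)
  (locX : localizable d ll le tau) (simpX : causally_simple d le)
  (HY : LPLS d' ll' le' tau') (lccY : locally_causally_closed d' le')
  (lcY : locally_compact d')
  (surj : forall y, exists x, f x = y) (Hhom : distance_homothetic tau tau' f)
  (lipf : locally_causally_Lipschitz d le d' f).

Let csX := LPLS_causal_space d ll le tau HX.
Let csY := LPLS_causal_space d' ll' le' tau' HY.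
Let mX := LPLS_metric d ll le tau HX.
Let mY := LPLS_metric d' ll' le' tau' HY.
Let detX := causally_simple_determined d ll le tau HX pcX locX simpX.

Lemma f_ll_iff x y : ll x y <-> ll' (f x) (f y).
Proof.
  destruct Hhom as [c [Hc Hh]].
  pose proof HX as (_ & _ & _ & _ & _ & _ & HposX). pose proof HY as (_ & _ & _ & _ & _ & _ & HposY).
  rewrite <- HposX, <- HposY, Hh.
  destruct (tau x y) as [t| |]; simpl; [split; intro; nra|..].
  all: destruct (Rle_dec 0 c) as [Hc0|]; [|lra].
  all: destruct (Rle_lt_or_eq_dec 0 c Hc0); simpl; tauto || lra.
Qed.

Lemma f_reflects_le x y : le' (f x) (f y) -> le x y.
Proof.
  intros Hxy. apply detX. intros z w Hzx Hyw. apply f_ll_iff in Hzx, Hyw. apply f_ll_iff.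
  exact (ll_trans _ _ csY _ _ _ (ll_le_trans d' ll' le' tau' HY _ _ _ Hzx Hxy) Hyw).
Qed.

Lemma f_ne_of_ll u w : ll u w -> f u <> f w.
Proof.
  intros Huw E. apply f_ll_iff in Huw. rewrite E in Huw. apply f_ll_iff in Huw.
  exact (causal_chronological d ll le csX (proj1 simpX) pcX w Huw).
Qed.

Lemma f_causal_continuous x e : 0 < e -> exists del, 0 < del /\
  forall x', (le x x' \/ le x' x) -> d x x' < del -> d' (f x) (f x') < e.
Proof.
  intros He. destruct (lipf x) as [U [M [HU [HUx [HM Hl]]]]].
  destruct (HU x HUx) as [r [Hr HUr]].
  exists (Rmin r (e / M)). split; [apply Rmin_glb_lt; [lra|apply Rdiv_lt_0_compat; lra]|].
  intros x' Hrel Hd. pose proof (Rmin_l r (e / M)). pose proof (Rmin_r r (e / M)).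
  assert (HUx' : U x') by (apply HUr; lra).
  assert (Hbound : d' (f x) (f x') <= M * d x x').
  { destruct Hrel; [|rewrite (metric_sym d' mY), (metric_sym d mX)]; apply Hl; assumption. }
  assert (M * d x x' < M * (e / M)) by (apply Rmult_lt_compat_l; lra).
  replace (M * (e / M)) with e in * by (field; lra). lra.
Qed.

Lemma f_seq_cv u x : seq_cv d u x -> (forall n, le (u n) x \/ le x (u n)) ->
  seq_cv d' (fun n => f (u n)) (f x).
Proof.
  intros Hu Hrel e He. destruct (f_causal_continuous x e He) as [del [Hdel Hcont]].
  destruct (Hu del Hdel) as [N HN]. exists N. intros n Hn.
  rewrite (metric_sym d' mY). apply Hcont; [apply or_comm, Hrel|].
  rewrite (metric_sym d mX). apply HN, Hn.
Qed.

Lemma f_lipschitz_on g a b : fd_causal_curve d le g a b ->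
  exists L, lipschitz_on d' (fun s => f (g s)) a b L.
Proof.
  intros Hg. pose proof Hg as [[Hab [[L HL] _]] _].
  apply (lipschitz_on_of_local d' mY); [lra|]. intros s Hs.
  destruct (lipf (g s)) as [U [M [HU [HUs [HM Hl]]]]]. destruct (HU (g s) HUs) as [r [Hr HUr]].
  destruct (lipschitz_on_small d g a b L HL r Hr) as [del [Hdel Hsmall]].
  exists del, (M * L). split; [exact Hdel|].
  assert (Hord : forall v w, a <= v <= b -> a <= w <= b ->
      Rabs (v - s) < del -> Rabs (w - s) < del -> v <= w ->
      d' (f (g v)) (f (g w)) <= M * L * Rabs (v - w)).
  { intros v w Hv Hw Hvs Hws Hvw.
    assert (HUv : U (g v)) by (apply HUr, Hsmall; [assumption|assumption|rewrite Rabs_minus_sym; assumption]).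
    assert (HUw : U (g w)) by (apply HUr, Hsmall; [assumption|assumption|rewrite Rabs_minus_sym; assumption]).
    eapply Rle_trans.
    - apply Hl; [exact HUv|exact HUw|]. apply (fd_causal_curve_le d ll le csX g a b Hg); lra.
    - rewrite Rmult_assoc. apply Rmult_le_compat_l; [lra|]. apply HL; assumption. }
  intros s1 s2 H1 H2 H1s H2s. destruct (Rle_lt_dec s1 s2); [apply Hord; assumption|].
  rewrite (metric_sym d' mY), Rabs_minus_sym. apply Hord; auto; lra.
Qed.

Lemma f_image_timelike_curve g a b : fd_timelike_curve d ll g a b ->
  fd_causal_curve d' le' (fun s => f (g s)) a b.
Proof.
  intros Hg. pose proof (fd_timelike_curve_causal d ll le csX g a b Hg) as Hgc.
  destruct (f_lipschitz_on g a b Hgc) as [L HL]. destruct Hg as [[Hab _] Hmon].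
  split; [split; [exact Hab|split]|].
  - exists L. exact HL.
  - exists a, b. split; [lra|split; [lra|]]. apply f_ne_of_ll, Hmon; lra.
  - intros s t Hs Hst Ht. apply (ll_le _ _ csY), f_ll_iff, Hmon; assumption.
Qed.

Lemma f_squeezed_cluster (u w r : nat -> X) p r0 :
  (forall n, ll (u n) p /\ ll p (w n) /\ le (u n) (r n) /\ le (r n) (w n)) ->
  seq_cv d u p -> seq_cv d w p -> cluster_point d' (fun n => f (r n)) (f r0) -> r0 = p.
Proof.
  intros Hnear Hu Hw Hcl. apply (proj1 simpX); apply detX; intros z v Hz Hv.
  - apply f_ll_iff in Hz. destruct (ll_open d' ll' le' tau' HY _ _ Hz) as [e' [He' Hball']].
    destruct (ll_open d ll le tau HX _ _ Hv) as [e [He Hball]].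
    destruct (Hw e He) as [N HN]. destruct (Hcl e' He' N) as [n [Hn Hdn]].
    destruct (Hnear n) as (_ & _ & _ & Hrw).
    apply f_ll_iff, (ll_trans _ _ csY) with (f (r n)).
    + apply Hball'; [rewrite (metric_refl d' mY); exact He'|rewrite (metric_sym d' mY); exact Hdn].
    + apply f_ll_iff, (le_ll_trans d ll le tau HX) with (w n); [exact Hrw|].
      apply Hball; [rewrite (metric_sym d mX); apply HN, Hn|rewrite (metric_refl d mX); exact He].
  - apply f_ll_iff in Hv. destruct (ll_open d' ll' le' tau' HY _ _ Hv) as [e' [He' Hball']].
    destruct (ll_open d ll le tau HX _ _ Hz) as [e [He Hball]].
    destruct (Hu e He) as [N HN]. destruct (Hcl e' He' N) as [n [Hn Hdn]].
    destruct (Hnear n) as (_ & _ & Hur & _).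
    apply f_ll_iff, (ll_trans _ _ csY) with (f (r n)).
    + apply f_ll_iff, (ll_le_trans d ll le tau HX) with (u n); [|exact Hur].
      apply Hball; [rewrite (metric_refl d mX); exact He|rewrite (metric_sym d mX); apply HN, Hn].
    + apply Hball'; [rewrite (metric_sym d' mY); exact Hdn|rewrite (metric_refl d' mY); exact He'].
Qed.

Lemma f_diamond_gap p eps K : 0 < eps -> compact_set d' K ->
  (forall y, d' (f p) y <= eps -> K y) ->
  exists eta, 0 < eta /\ forall u w r, ll u p -> ll p w -> le u r -> le r w ->
    d u p < eta -> d w p < eta -> d' (f p) (f r) <= eps -> d' (f p) (f r) < eps / 2.
Proof.
  intros Heps HK HKball. apply NNPP. intro Hno.
  set (Bad := fun t : X * X * X =>
    ll (fst (fst t)) p /\ ll p (snd (fst t)) /\ le (fst (fst t)) (snd t) /\ le (snd t) (snd (fst t)) /\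
    eps / 2 <= d' (f p) (f (snd t)) <= eps).
  set (size := fun t : X * X * X => Rmax (d (fst (fst t)) p) (d (snd (fst t)) p)).
  assert (Hbad : forall e, 0 < e -> exists t, Bad t /\ size t < e).
  { intros e He. apply NNPP. intro Hn. apply Hno. exists e. split; [exact He|].
    intros u w r Hu Hw Hur Hrw Hdu Hdw Hle. apply Rnot_le_lt. intro Hge. apply Hn.
    exists (u, w, r). split; [repeat split; assumption|]. apply Rmax_lub_lt; assumption. }
  destruct (exists_vanishing_seq Bad size Hbad) as [T [HT Hsize]].
  set (u := fun n => fst (fst (T n))). set (w := fun n => snd (fst (T n))).
  set (r := fun n => snd (T n)).
  assert (Hu : seq_cv d u p).
  { intros e He. destruct (Hsize e He) as [N HN]. exists N. intros n Hn.
    pose proof (Rmax_l (d (u n) p) (d (w n) p)). pose proof (HN n Hn). unfold size, u, w in *. cbv beta in *. lra. }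
  assert (Hw : seq_cv d w p).
  { intros e He. destruct (Hsize e He) as [N HN]. exists N. intros n Hn.
    pose proof (Rmax_r (d (u n) p) (d (w n) p)). pose proof (HN n Hn). unfold size, u, w in *. cbv beta in *. lra. }
  destruct (compact_cluster_point d' mY K HK (fun n => f (r n))) as [y0 [_ Hcl]].
  { intro n. apply HKball, (HT n). }
  destruct (surj y0) as [r0 <-].
  assert (Hnear : forall n, ll (u n) p /\ ll p (w n) /\ le (u n) (r n) /\ le (r n) (w n))
    by (intro n; destruct (HT n) as (H1 & H2 & H3 & H4 & _); auto).
  rewrite (f_squeezed_cluster u w r p r0 Hnear Hu Hw Hcl) in Hcl.
  destruct (Hcl (eps / 2)) with O as [n [_ Hn]]; [lra|].
  destruct (HT n) as (_ & _ & _ & _ & Hfar & _). rewrite (metric_sym d' mY) in Hn.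
  unfold r in Hn. lra.
Qed.

Lemma f_curve_localized p eps K : 0 < eps -> compact_set d' K ->
  (forall y, d' (f p) y <= eps -> K y) ->
  exists eta, 0 < eta /\ forall g a b, fd_causal_curve d le g a b ->
    ll (g a) p -> ll p (g b) -> d (g a) p < eta -> d (g b) p < eta ->
    forall s, a <= s <= b -> d' (f p) (f (g s)) < eps.
Proof.
  intros Heps HK HKball.
  destruct (f_diamond_gap p eps K Heps HK HKball) as [eta [Heta Hgap]].
  destruct (f_causal_continuous p (eps / 2)) as [del [Hdel Hcont]]; [lra|].
  exists (Rmin eta del). split; [apply Rmin_glb_lt; lra|].
  pose proof (Rmin_l eta del). pose proof (Rmin_r eta del).
  intros g a b Hg Ha Hb Hda Hdb s Hs. apply Rnot_le_lt. intro Hfar.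
  destruct (f_lipschitz_on g a b Hg) as [L HL].
  assert (Hstart : d' (f p) (f (g a)) < eps / 2).
  { apply Hcont; [right; apply (ll_le _ _ csX), Ha|rewrite (metric_sym d mX); lra]. }
  destruct (lipschitz_curve_crosses_annulus d' mY _ a b L (f p) s (eps / 2) eps HL Hs)
    as [s' [Hs' [Hann1 Hann2]]]; [lra|exact Hstart|exact Hfar|].
  assert (d' (f p) (f (g s')) < eps / 2); [|lra].
  apply Hgap with (g a) (g b); try assumption; try lra;
    apply (fd_causal_curve_le d ll le csX g a b Hg); lra.
Qed.

Lemma f_le_near p : exists eta, 0 < eta /\ forall q1 q2, le q1 p -> le p q2 ->
  d q1 p < eta -> d q2 p < eta -> le' (f q1) (f q2).
Proof.
  destruct (lccY (f p)) as [V [HV [HVp HVcc]]]. destruct (HV (f p) HVp) as [eV [HeV HVball]].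
  destruct (lcY (f p)) as [K [HK [eK [HeK HKball]]]].
  assert (Hmin : 0 < Rmin eV eK) by (apply Rmin_glb_lt; lra).
  pose proof (Rmin_l eV eK). pose proof (Rmin_r eV eK).
  set (eps := Rmin eV eK / 2).
  destruct (f_curve_localized p eps K) as [eta [Heta Hloc]];
    [unfold eps; lra|exact HK|intros y Hy; apply HKball; unfold eps in Hy; lra|].
  destruct (f_causal_continuous p eps) as [del [Hdel Hcont]]; [unfold eps; lra|].
  exists (Rmin (eta / 2) del). split; [apply Rmin_glb_lt; lra|].
  pose proof (Rmin_l (eta / 2) del). pose proof (Rmin_r (eta / 2) del).
  intros q1 q2 Hq1 Hq2 Hd1 Hd2.
  (* the timelike curves from [u n << p] to [p << w n] have images in [V], and causal
     closedness of [V] passes to the limit [f q1 <=_V f q2] *)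
  destruct (past_seq_cv d ll le tau pcX locX q1 (eta / 2)) as [u [Hu Hucv]]; [lra|].
  destruct (future_seq_cv d ll le tau pcX locX q2 (eta / 2)) as [w [Hw Hwcv]]; [lra|].
  apply (le_in_le d' ll' le' csY V).
  apply (HVcc (fun n => f (u n)) (fun n => f (w n))).
  - intro n. destruct (Hu n) as [Hun Hdun]. destruct (Hw n) as [Hwn Hdwn].
    assert (Hup : ll (u n) p) by exact (ll_le_trans d ll le tau HX _ _ _ Hun Hq1).
    assert (Hpw : ll p (w n)) by exact (le_ll_trans d ll le tau HX _ _ _ Hq2 Hwn).
    destruct (proj2 pcX (u n) (w n) (ll_trans _ _ csX _ _ _ Hup Hpw)) as [g [a [b [Hg [Ha Hb]]]]].
    right. exists (fun s => f (g s)), a, b.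
    split; [apply f_image_timelike_curve, Hg|]. rewrite Ha, Hb. split; [reflexivity|split; [reflexivity|]].
    intros s Hs. apply HVball. apply Rlt_trans with eps; [|unfold eps; lra].
    pose proof (metric_triangle d mX (u n) q1 p). pose proof (metric_triangle d mX (w n) q2 p).
    apply (Hloc g a b (fd_timelike_curve_causal d ll le csX g a b Hg));
      rewrite ?Ha, ?Hb; [exact Hup|exact Hpw|lra|lra|exact Hs].
  - apply f_seq_cv; [exact Hucv|]. intro n. left. apply (ll_le _ _ csX), Hu.
  - apply HVball. apply Rlt_trans with eps; [|unfold eps; lra].
    apply Hcont; [right; exact Hq1|rewrite (metric_sym d mX); lra].
  - apply f_seq_cv; [exact Hwcv|]. intro n. right. apply (ll_le _ _ csX), Hw.
  - apply HVball. apply Rlt_trans with eps; [|unfold eps; lra].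
    apply Hcont; [left; exact Hq2|rewrite (metric_sym d mX); lra].
Qed.

Lemma f_preserves_le x y : le x y -> le' (f x) (f y).
Proof.
  intros Hxy. destruct (classic (x = y)) as [<-|Nxy]; [apply (le_refl _ _ csY)|].
  destruct (proj1 pcX x y (conj Hxy Nxy)) as [g [a [b [Hg [<- <-]]]]].
  pose proof Hg as [[Hab [[L HL] _]] _].
  apply (continuity_induction a b (fun s => le' (f (g a)) (f (g s)))); [apply (le_refl _ _ csY)| |lra].
  intros s Hs. destruct (f_le_near (g s)) as [eta [Heta Hnear]].
  destruct (lipschitz_on_small d g a b L HL eta Heta) as [del [Hdel Hsmall]].
  exists del. split; [exact Hdel|]. intros t u Ht Hu Hst Hus Pt.
  apply (le_trans _ _ csY) with (f (g t)); [exact Pt|].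
  apply Hnear; try (apply (fd_causal_curve_le d ll le csX g a b Hg); lra);
    apply Hsmall; try lra; apply Rabs_def1; lra.
Qed.

Lemma codomain_chronologically_determined : chronologically_determined ll' le'.
Proof.
  intros y1 y2 Hy. destruct (surj y1) as [x1 <-]. destruct (surj y2) as [x2 <-].
  apply f_preserves_le, detX. intros z w Hz Hw. apply f_ll_iff, Hy; apply f_ll_iff; assumption.
Qed.

Lemma codomain_causal : causal le'.
Proof.
  intros y1 y2 H12 H21. destruct (surj y1) as [x1 <-]. destruct (surj y2) as [x2 <-].
  f_equal. apply (proj1 simpX); apply f_reflects_le; assumption.
Qed.

End Homothety.

Theorem proposition4p8 (X Y : Type)
    (d : X -> X -> R) (ll le : X -> X -> Prop) (tau : X -> X -> Rbar)
    (d' : Y -> Y -> R) (ll' le' : Y -> Y -> Prop) (tau' : Y -> Y -> Rbar)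
    (f : X -> Y) :
  LLS d ll le tau -> LLS d' ll' le' tau' ->
  (forall y, exists x, f x = y) ->
  distance_homothetic tau tau' f ->
  locally_causally_Lipschitz d le d' f ->
  causally_simple d le ->
  locally_compact d' ->
  causally_simple d' le'.
Proof.
  intros [HX [pcX [_ [locX _]]]] [HY [_ [lccY _]]] surj Hhom lipf simpX lcY.
  assert (Hdet : chronologically_determined ll' le')
    by exact (codomain_chronologically_determined d ll le tau d' ll' le' tau' f
                HX pcX locX simpX HY lccY lcY surj Hhom lipf).
  split; [exact (codomain_causal d ll le tau d' ll' le' tau' f HX pcX locX simpX HY surj Hhom)|].
  intro y. split.
  - exact (closed_future_of_determined d' ll' le' tau' HY Hdet y).
  - exact (closed_past_of_determined d' ll' le' tau' HY Hdet y).
Qed.
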